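(* Let $A,B$ be commuting nilpotent $n\times n$ matrices with $\mathrm{sh}(B)=(\lambda_1,\lambda_2)$, $\lambda_1\ge\lambda_2\ge1$, and $\mathrm{sh}(A)=(\mu_1,\ldots,\mu_s)$. If $s>\lambda_1$, then $\mu_1\le\left\lceil\frac{\lambda_2}{s-\lambda_1}\right\rceil$.
   Context: $\mathbb{F}$ is an algebraically closed field of characteristic $0$ and matrices are over $\mathbb{F}$. For a nilpotent matrix $A$, $\mathrm{sh}(A)$ is the partition of $n$ given by the sizes of the Jordan blocks of its Jordan canonical form (so $s$ is the number of Jordan blocks of $A$ and $\mu_1$ its nilpotency index). *)

From HB Require Import structures.
From mathcomp Require Import all_boot all_order all_algebra.
Set Implicit Arguments. Unset Strict Implicit. Unset Printing Implicit Defensive.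
Import GRing.Theory.
Local Open Scope ring_scope.

Definition is_partition (p : seq nat) (n : nat) : bool :=
  [&& sorted geq p, all (fun x => 0 < x)%N p & sumn p == n].

(* Positions (0-based) at which a new Jordan block starts, except 0:
   the partial sums mu_1, mu_1+mu_2, ... *)
Definition block_ends (p : seq nat) : seq nat :=
  [seq sumn (take m p) | m <- iota 1 (size p)].

(* The nilpotent Jordan matrix J_{p_1} (+) J_{p_2} (+) ... (ones on the
   superdiagonal inside each block). *)
Definition nilJordan (F : nzRingType) (n : nat) (p : seq nat) : 'M[F]_n :=
  \matrix_(i < n, j < n)
    (if (nat_of_ord j == (nat_of_ord i).+1) && ((nat_of_ord i).+1 \notin block_ends p)
     then 1 else 0).

Definition sh_is (F : fieldType) (n : nat) (A : 'M[F]_n) (p : seq nat) : Prop :=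
  is_partition p n /\
  exists P : 'M[F]_n, P \in unitmx /\ P *m A *m invmx P = nilJordan F n p.

From HB Require Import structures.
From mathcomp Require Import all_boot all_order all_algebra.
From mathcomp Require Import zify.
Set Implicit Arguments. Unset Strict Implicit. Unset Printing Implicit Defensive.
Import GRing.Theory.

(* Write d = s - l1 and K = ker A (row kernel).  Since B has two blocks,
   rank ker B <= 2, and for any B-stable row space W the ranks
   i |-> rank (W B^i) form a decreasing convex sequence whose steps are at
   most rank ker B.  Applied to W = K (of rank >= s, killed by B^l1) this
   forces the first d steps to have size exactly 2, hence
   ker B^d <= K.  Applied to W = A^j (B-stable since A, B commute) it shows
   that each rank drop rank A^j - rank A^(j+1) is at least d as long as
   A^(j+1) != 0.  Starting from rank A <= n - s = l2 - d this gives
   (m - 1) d < l2, which is the claim. *)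

Section ConvexDecreasingSequences.
Variable h : nat -> nat.
Hypothesis h_decr : forall i, h i.+1 <= h i.
Hypothesis h_convex : forall i, h i.+1 - h i.+2 <= h i - h i.+1.

Lemma h_mono i k : i <= k -> h k <= h i.
Proof.
by move=> /subnK <-; elim: (k - i) => [|t IH] //; rewrite addSn (leq_trans (h_decr _)).
Qed.

Lemma step_mono i j : i <= j -> h j - h j.+1 <= h i - h i.+1.
Proof.
by move=> /subnK <-; elim: (j - i) => [|t IH] //; rewrite addSn (leq_trans (h_convex _)).
Qed.

Lemma drop_sum i k : i <= k -> h i - h k = \sum_(i <= j < k) (h j - h j.+1).
Proof.
elim: k => [|k IH]; first by rewrite leqn0 => /eqP->; rewrite subnn big_geq.
rewrite leq_eqVlt => /predU1P[->|]; first by rewrite subnn big_geq.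
rewrite ltnS => ik; rewrite big_nat_recr //= -IH //.
by have := h_mono ik; have := h_decr k; lia.
Qed.

Lemma drop_le c i k : i <= k -> (forall j, i <= j < k -> h j - h j.+1 <= c) ->
  h i - h k <= c * (k - i).
Proof.
move=> ik hc; rewrite drop_sum // mulnC -sum_nat_const_nat.
rewrite [X in X <= _]big_nat_cond [X in _ <= X]big_nat_cond; apply: leq_sum => j.
by rewrite andbT => /hc.
Qed.

Lemma drop_ge c i k : i <= k -> (forall j, i <= j < k -> c <= h j - h j.+1) ->
  c * (k - i) <= h i - h k.
Proof.
move=> ik hc; rewrite drop_sum // mulnC -sum_nat_const_nat.
rewrite [X in X <= _]big_nat_cond [X in _ <= X]big_nat_cond; apply: leq_sum => j.
by rewrite andbT => /hc.
Qed.

(* By convexity a single step of size <= c bounds every later step by c. *)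
Lemma flat_tail c i k : i <= k -> h i - h i.+1 <= c -> h i - h k <= c * (k - i).
Proof.
move=> ik hi; apply: drop_le => // j /andP[ij _]; exact: leq_trans (step_mono ij) hi.
Qed.

(* With steps of size <= 2, a sequence of height >= a + d that vanishes at a
   must drop by exactly 2 in each of its first d steps: one slower step
   would make every later step slow and the sequence could not vanish. *)
Lemma drop_two_per_step a d : (forall i, h i - h i.+1 <= 2) -> h a = 0 ->
  a + d <= h 0 -> 2 * d <= h 0 - h d.
Proof.
move=> step2 ha had.
have d_le_a : d <= a.
  by have := drop_le (leq0n a) (fun j _ => step2 j); rewrite ha; lia.
rewrite -[d in 2 * d]subn0; apply: drop_ge => // i /andP[_ id].
rewrite leqNgt; apply/negP => slow.
have first_drop := drop_le (leq0n i) (fun j _ => step2 j).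
have later_drop := @flat_tail 1 i a ltac:(lia) ltac:(lia).
by have := h_mono (leq0n i); have := h_mono (_ : i <= a); lia.
Qed.

(* A sequence vanishing at some N strictly decreases as long as it is
   positive, since a zero step would freeze it forever. *)
Lemma drop_one_per_step N d : h N = 0 -> 0 < h d -> d <= h 0 - h d.
Proof.
move=> hN hd; rewrite -[d in d <= _]muln1 mulnC -[d in 1 * d]subn0.
apply: drop_ge => // i /andP[_ id]; rewrite leqNgt; apply/negP => stuck.
have later_drop := @flat_tail 0 i (maxn d N) ltac:(lia) ltac:(lia).
have := h_mono (_ : N <= maxn d N); have := h_mono (_ : d <= maxn d N).
by have := h_mono (ltnW id); lia.
Qed.
End ConvexDecreasingSequences.

Section MatrixPowers.
Local Open Scope ring_scope.
Variables (F : fieldType) (n : nat).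

Lemma mx_exprSr (M : 'M[F]_n) i : M ^+ i.+1 = M ^+ i *m M.
Proof. by rewrite exprSr mulmxE. Qed.

Lemma mx_exprS (M : 'M[F]_n) i : M ^+ i.+1 = M *m M ^+ i.
Proof. by rewrite exprS mulmxE. Qed.
End MatrixPowers.

Section StableSubspaceRanks.
Local Open Scope ring_scope.
Variables (F : fieldType) (m n : nat) (B : 'M[F]_n) (W : 'M[F]_(m, n)).
Hypothesis W_stable : (W *m B <= W)%MS.

Lemma orbit_rank_step i :
  (\rank (W *m B ^+ i) - \rank (W *m B ^+ i.+1))%N = \rank (W *m B ^+ i :&: kermx B).
Proof. by rewrite -(mxrank_mul_ker (W *m B ^+ i) B) -mulmxA -mx_exprSr addKn. Qed.

Lemma orbit_rank_decr i : (\rank (W *m B ^+ i.+1) <= \rank (W *m B ^+ i))%N.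
Proof. by rewrite mx_exprSr mulmxA mxrankM_maxl. Qed.

Lemma orbit_rank_convex i :
  (\rank (W *m B ^+ i.+1) - \rank (W *m B ^+ i.+2) <=
   \rank (W *m B ^+ i) - \rank (W *m B ^+ i.+1))%N.
Proof.
rewrite !orbit_rank_step; apply/mxrankS/capmxS => //.
by rewrite mx_exprS mulmxA submxMr.
Qed.

Lemma orbit_rank_step_le i :
  (\rank (W *m B ^+ i) - \rank (W *m B ^+ i.+1) <= \rank (kermx B))%N.
Proof. by rewrite orbit_rank_step mxrankS ?capmxSr. Qed.
End StableSubspaceRanks.

Section CommutingNilpotentBound.
Local Open Scope ring_scope.
Variables (F : fieldType) (n : nat) (A B : 'M[F]_n) (a b s : nat).
Hypothesis AB_comm : A *m B = B *m A.
Hypothesis B_nil : B ^+ a = 0.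
Hypothesis kerB_rank : (\rank (kermx B) <= 2)%N.
Hypothesis n_split : n = (a + b)%N.
Hypothesis kerA_rank : (s <= \rank (kermx A))%N.
Hypothesis a_lt_s : (a < s)%N.

Local Notation d := (s - a)%N.

Lemma powA_B_stable j : (A ^+ j *m B <= A ^+ j)%MS.
Proof.
have cBA : GRing.comm B A by rewrite /GRing.comm -!mulmxE AB_comm.
by move: (commrX j cBA); rewrite /GRing.comm -!mulmxE => <-; apply: submxMl.
Qed.

Lemma kerA_stable : (kermx A *m B <= kermx A)%MS.
Proof. by apply/sub_kermxP; rewrite -mulmxA -AB_comm mulmxA mulmx_ker mul0mx. Qed.

Lemma rank_kerBX i : (\rank (kermx (B ^+ i)) <= 2 * i)%N.
Proof.
have := drop_le (@orbit_rank_decr F n n B 1%:M) (leq0n i)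
  (fun j _ => leq_trans (orbit_rank_step_le _ _ j) kerB_rank).
by rewrite mxrank_ker !mul1mx expr0 mxrank1 subn0.
Qed.

(* Key step: the first d = s - a steps of i |-> rank (ker A B^i) have size 2,
   so ker A meets ker B^d in dimension >= 2 d >= dim ker B^d. *)
Lemma kerBd_sub_kerA : (kermx (B ^+ d) <= kermx A)%MS.
Proof.
set K := kermx A.
have := @drop_two_per_step _ (orbit_rank_decr B K) (orbit_rank_convex kerA_stable) a d
  (fun j => leq_trans (orbit_rank_step_le _ _ j) kerB_rank).
rewrite /= B_nil mulmx0 mxrank0 expr0 mulmx1 => /(_ erefl).
have -> : (a + d = s)%N by rewrite subnKC // ltnW.
move=> /(_ kerA_rank) steep.
have capK := mxrank_mul_ker K (B ^+ d).
have capK_sub : (K :&: kermx (B ^+ d) <= kermx (B ^+ d))%MS by apply: capmxSr.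
have [_ eq_rank] := mxrank_leqif_sup capK_sub.
apply: (submx_trans _ (capmxSl K (kermx (B ^+ d)))).
rewrite -eq_rank eqn_leq mxrankS //=.
by have := rank_kerBX d; lia.
Qed.

(* As long as A^(j+1) != 0, the rank of A drops by at least d at step j:
   A^j B^d != 0 by the key step, so the ranks of A^j B^i strictly decrease
   for i <= d, and the kernel of B^d inside A^j lies in the kernel of A. *)
Lemma rank_pow_step j : A ^+ j.+1 != 0 -> (d + \rank (A ^+ j.+1) <= \rank (A ^+ j))%N.
Proof.
move=> Aj1_neq0.
have Bd_nz : (0 < \rank (A ^+ j *m B ^+ d))%N.
  rewrite lt0n mxrank_eq0; apply: contra Aj1_neq0 => /eqP AjBd0.
  have /sub_kermxP : (A ^+ j <= kermx A)%MS.
    by apply: submx_trans kerBd_sub_kerA; apply/sub_kermxP.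
  by rewrite -mx_exprSr => ->.
have := @drop_one_per_step _ (orbit_rank_decr B _) (orbit_rank_convex (powA_B_stable j)) a d.
rewrite /= B_nil mulmx0 mxrank0 expr0 mulmx1 => /(_ erefl Bd_nz).
have capBd := mxrank_mul_ker (A ^+ j) (B ^+ d).
have capA := mxrank_mul_ker (A ^+ j) A; rewrite -mx_exprSr in capA.
have : (\rank (A ^+ j :&: kermx (B ^+ d)) <= \rank (A ^+ j :&: kermx A))%N.
  by rewrite mxrankS // capmxS // kerBd_sub_kerA.
lia.
Qed.

(* Iterating from rank A <= n - s = b - d. *)
Lemma rank_pow_bound j : (0 < j)%N -> A ^+ j != 0 -> (\rank (A ^+ j) + j * d <= b)%N.
Proof.
elim: j => [//|[|j] IH] _ Aj_nz.
  have := mxrank_ker A; have := rank_leq_row A.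
  by rewrite expr1 mul1n; lia.
have Aj_nz' : A ^+ j.+1 != 0.
  by apply: contraNneq Aj_nz => Aj0; rewrite exprSr Aj0 mul0r.
by have := rank_pow_step Aj_nz; have := IH isT Aj_nz'; rewrite mulSn; lia.
Qed.

Lemma pow_neq0_bound j : A ^+ j != 0 -> (j * d < b)%N.
Proof.
case: j => [|j] Aj_nz.
  by have := rank_leq_row (kermx A); rewrite mul0n; lia.
have rank_pos : (0 < \rank (A ^+ j.+1))%N by rewrite lt0n mxrank_eq0.
by have := @rank_pow_bound j.+1 isT Aj_nz; lia.
Qed.
End CommutingNilpotentBound.

Lemma block_ends_cons x p :
  block_ends (x :: p) = x :: map (addn x) (block_ends p).
Proof.
rewrite /block_ends /= take0 addn0 (iotaDl 1 1) -!map_comp.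
by congr (_ :: _); apply: eq_map => k.
Qed.

Lemma size_block_ends p : size (block_ends p) = size p.
Proof. by rewrite size_map size_iota. Qed.

Lemma block_ends_ge_head p u : u \in block_ends p -> head 0 p <= u.
Proof.
case: p => [//|x p]; rewrite block_ends_cons inE => /predU1P[->//|].
by case/mapP=> v _ ->; apply: leq_addr.
Qed.

Lemma block_ends_bounds p u : all (fun x => 0 < x) p ->
  u \in block_ends p -> 0 < u <= sumn p.
Proof.
elim: p u => [//|x p IH] u /andP[x_pos p_pos].
rewrite block_ends_cons inE => /predU1P[->|/mapP[v /(IH v p_pos) v_bd ->]] /=; lia.
Qed.

Lemma block_ends_uniq p : all (fun x => 0 < x) p -> uniq (block_ends p).
Proof.
elim: p => [//|x p IH] /andP[x_pos p_pos].
rewrite block_ends_cons /= (map_inj_uniq (@addnI x)) IH // andbT.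
by apply/mapP => -[v /(block_ends_bounds p_pos)]; lia.
Qed.

Lemma sumn_block_end p : p != [::] -> sumn p \in block_ends p.
Proof.
move=> p_nil; apply/mapP; exists (size p); last by rewrite take_size.
by rewrite mem_iota add1n ltnSn andbT lt0n size_eq0.
Qed.

Lemma block_end_cover p i : sorted geq p -> i < sumn p ->
  exists2 u, u \in block_ends p & i < u <= i + head 0 p.
Proof.
elim: p i => [//|x p IH] i /= p_sorted i_lt; rewrite block_ends_cons.
have x_ge : head 0 p <= x by case: p p_sorted {IH i_lt} => //= y p /andP[].
case: (ltnP i x) => [i_lt_x | x_le_i]; first by exists x; rewrite ?mem_head //; lia.
have [||u u_in u_bd] := IH (i - x); [exact: path_sorted p_sorted | lia |].
by exists (x + u); [rewrite inE map_f ?orbT | lia].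
Qed.

Lemma count_block_ends p n : is_partition p n ->
  count (fun i => i.+1 \in block_ends p) (iota 0 n) = size p.
Proof.
case/and3P=> _ p_pos /eqP p_sum.
rewrite -size_block_ends -(count_map succn (mem (block_ends p))).
rewrite -(iotaDl 1 0) -size_filter; apply/perm_size/uniq_perm.
- by rewrite filter_uniq ?iota_uniq.
- exact: block_ends_uniq.
move=> u; rewrite mem_filter mem_iota; apply/andP/idP => [[]//| u_in].
by split=> //; have := block_ends_bounds p_pos u_in; rewrite -p_sum; lia.
Qed.

Section NilpotentJordanMatrix.
Local Open Scope ring_scope.
Variables (F : fieldType) (n : nat) (p : seq nat).
Local Notation E := (block_ends p).
Local Notation J := (nilJordan F n p).

(* The k-th standard basis row vector (zero when k >= n). *)
Definition basis_row (k : nat) : 'rV[F]_n := \row_j ((j : nat) == k)%:R.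

Lemma row_basis (M : 'M[F]_n) (i : 'I_n) : row i M = basis_row i *m M.
Proof. by rewrite rowE; congr (_ *m _); apply/rowP => j; rewrite !mxE. Qed.

Lemma basis_row_mulJ k : basis_row k *m J = if k.+1 \in E then 0 else basis_row k.+1.
Proof.
apply/rowP => j; rewrite mxE.
case: (ltnP k n) => [k_lt | k_ge]; last first.
  rewrite big1 => [|i _]; last first.
    by rewrite !mxE; case: eqP => [ik|_]; [have := ltn_ord i; lia | rewrite mul0r].
  by case: ifP => _; rewrite !mxE //; case: eqP => // jk; have := ltn_ord j; lia.
rewrite (bigD1 (Ordinal k_lt)) //= big1 => [|i ik]; last first.
  by rewrite !mxE; case: eqP => [ik'|]; [move: ik; rewrite -val_eqE /= ik' eqxx | rewrite mul0r].
rewrite !mxE eqxx mul1r addr0.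
by case: (k.+1 \in E); rewrite /= ?andbF ?andbT ?mxE; case: (j == k.+1 :> nat).
Qed.

Lemma basis_row_mulJX_shift t k : (forall u, (k < u <= k + t)%N -> u \notin E) ->
  basis_row k *m J ^+ t = basis_row (k + t).
Proof.
elim: t k => [|t IH] k no_end; first by rewrite expr0 mulmx1 addn0.
rewrite mx_exprS mulmxA basis_row_mulJ ifN; last by apply: no_end; lia.
by rewrite IH -?addSnnS // => u u_bd; apply: no_end; lia.
Qed.

Lemma basis_row_mulJX_zero t k u : u \in E -> (k < u <= k + t)%N ->
  basis_row k *m J ^+ t = 0.
Proof.
move=> u_in; elim: t k => [|t IH] k u_bd; first by lia.
rewrite mx_exprS mulmxA basis_row_mulJ.
case: ifP => [_|k1_notin]; first by rewrite mul0mx.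
apply: IH; have : u != k.+1 by apply: contraFneq k1_notin => <-.
lia.
Qed.

(* J^(p_1) = 0: from every basis row, a block end is reached within p_1 steps. *)
Lemma nilJordan_pow_head : is_partition p n -> J ^+ head 0 p = 0.
Proof.
case/and3P=> p_sorted _ /eqP p_sum; apply/row_matrixP => i.
rewrite row0 row_basis.
have [u u_in u_bd] := @block_end_cover p i p_sorted ltac:(by rewrite p_sum).
exact: basis_row_mulJX_zero u_in u_bd.
Qed.

(* e_0 J^(p_1 - 1) = e_(p_1 - 1) != 0, so J^(p_1 - 1) != 0. *)
Lemma nilJordan_pow_neq0 : is_partition p n -> p != [::] -> J ^+ (head 0 p).-1 != 0.
Proof.
case/and3P=> _ p_pos /eqP p_sum p_nil.
have head_pos : (0 < head 0 p)%N by case: p p_pos p_nil => //= x p' /andP[].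
have head_le : (head 0 p <= n)%N by rewrite -p_sum; case: p {p_pos p_nil head_pos} => //= x p'; lia.
have head_lt : ((head 0 p).-1 < n)%N by lia.
have no_end u : (0 < u <= 0 + (head 0 p).-1)%N -> u \notin E.
  by move=> u_bd; apply/negP => /block_ends_ge_head; lia.
apply/eqP => J0; have := basis_row_mulJX_shift no_end.
rewrite J0 mulmx0 add0n => /rowP/(_ (Ordinal head_lt)).
by rewrite !mxE eqxx => /eqP; rewrite eq_sym oner_eq0.
Qed.

Definition diag_pred (P : pred nat) : 'M[F]_n := diag_mx (\row_(i < n) (P i)%:R).

Lemma rank_diag_pred_le (P : pred nat) : (\rank (diag_pred P) <= count P (iota 0 n))%N.
Proof.
have -> : count P (iota 0 n) = (\sum_(i < n) P i)%N.
  rewrite -(big_mkord xpredT (fun i => nat_of_bool (P i))) /index_iota subn0.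
  by rewrite -sum1_count big_mkcond; apply: eq_bigr => i _; case: (P i).
rewrite /diag_pred diag_mx_sum_delta.
elim/big_ind2: _ => [|r1 r2 M1 M2 le1 le2|i _]; first by rewrite mxrank0.
  exact: leq_trans (mxrank_add _ _) (leq_add le1 le2).
rewrite mxE; case: (P i); last by rewrite scale0r mxrank0.
by rewrite scale1r mxrank_delta.
Qed.

Lemma rank_diag_pred (P : pred nat) : \rank (diag_pred P) = count P (iota 0 n).
Proof.
have sum_compl : diag_pred P + diag_pred (predC P) = 1%:M.
  apply/matrixP => i j; rewrite !mxE /=.
  by case: (P i); case: (i == j); rewrite /= ?mulr1n ?mulr0n ?addr0 ?add0r.
have := mxrank_add (diag_pred P) (diag_pred (predC P)).
rewrite sum_compl mxrank1.
have := count_predC P (iota 0 n); rewrite size_iota.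
have := rank_diag_pred_le P; have := rank_diag_pred_le (predC P).
lia.
Qed.

Local Notation D := (diag_pred (fun i => i.+1 \notin E)).

(* Row i of J is e_(i+1) unless a block ends at i+1, in which case it is 0;
   hence J = D J for the diagonal projection D onto those rows. *)
Lemma nilJordan_diag_factor : J = D *m J.
Proof.
apply/matrixP => i j; rewrite mul_diag_mx !mxE.
by case: (_.+1 \in E); rewrite /= ?andbF ?mul1r ?mul0r.
Qed.

(* J J^T is the same diagonal projection, as the nonzero rows of J are distinct basis vectors. *)
Lemma nilJordan_mul_tr : n \in E -> J *m J^T = D.
Proof.
move=> n_end; apply/matrixP => i k; rewrite !mxE.
case: (ltnP i.+1 n) => [i1_lt | i1_ge]; last first.
  have i1_n : i.+1 = n by have := ltn_ord i; lia.
  rewrite big1 => [|j _]; last first.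
    by rewrite !mxE; case: eqP => [ji|_]; [have := ltn_ord j; lia | rewrite mul0r].
  by rewrite i1_n n_end /= mul0rn.
rewrite (bigD1 (Ordinal i1_lt)) //= big1 => [|j ji]; last first.
  rewrite !mxE; case: eqP => [ji'|_]; last by rewrite mul0r.
  by move: ji; rewrite -val_eqE /= ji' eqxx.
rewrite !mxE eqxx /= addr0.
case i1_end: (i.+1 \in E); rewrite /= ?mul0r ?mul1r ?mul0rn //.
case: (eqVneq i k) => [<-|ik]; first by rewrite eqxx i1_end.
by rewrite eqSS val_eqE (negPf ik).
Qed.

Lemma rank_nilJordan : is_partition p n -> (\rank J + size p)%N = n.
Proof.
move=> p_part; case: (eqVneq p [::]) => [p_nil | p_nnil].
  move: p_part; rewrite p_nil => /and3P[_ _ /eqP /= n0].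
  by have := rank_leq_row (nilJordan F n [::]); rewrite /=; lia.
have n_end : n \in E.
  by move: (p_part) => /and3P[_ _ /eqP <-]; exact: sumn_block_end.
have rankJ : \rank J = \rank D.
  apply/eqP; rewrite eqn_leq {1}nilJordan_diag_factor mxrankM_maxl.
  by rewrite -nilJordan_mul_tr // mxrankM_maxl.
rewrite rankJ rank_diag_pred -(count_block_ends p_part).
by rewrite -[RHS](size_iota 0 n) -(count_predC (fun i => i.+1 \in E)) addnC.
Qed.
End NilpotentJordanMatrix.

Section SimilarityInvariance.
Local Open Scope ring_scope.
Variables (F : fieldType) (n : nat).

Lemma conj_pow (P M : 'M[F]_n) k : P \in unitmx ->
  (P *m M *m invmx P) ^+ k = P *m M ^+ k *m invmx P.
Proof.
move=> P_unit; elim: k => [|k IH]; first by rewrite !expr0 mulmx1 mulmxV.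
by rewrite mx_exprS IH mx_exprS !mulmxA mulmxKV.
Qed.

Lemma rank_conj (P M : 'M[F]_n) : P \in unitmx -> \rank (P *m M *m invmx P) = \rank M.
Proof.
move=> P_unit; rewrite mxrankMfree ?row_free_unit ?unitmx_inv //.
apply/eqP; rewrite eqn_leq mxrankM_maxr /=.
by rewrite -{1}(mulKmx P_unit M) mxrankM_maxr.
Qed.

Lemma sh_rank_pow (A : 'M[F]_n) p k : sh_is A p ->
  \rank (A ^+ k) = \rank (nilJordan F n p ^+ k).
Proof. by case=> _ [P [P_unit <-]]; rewrite conj_pow // rank_conj. Qed.
End SimilarityInvariance.

Theorem proposition3p8 (F : closedFieldType) (hchar : ([pchar F]%R) =i pred0)
  (n : nat) (A B : 'M[F]_n) (l1 l2 : nat) (mu : seq nat)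
  (hcomm : (A *m B = B *m A)%R)
  (hB : sh_is B [:: l1; l2]) (hl : (1 <= l2 <= l1)%N)
  (hA : sh_is A mu)
  (hs : (size mu > l1)%N) :
  (head 0%N mu <= (l2 + (size mu - l1) - 1) %/ (size mu - l1))%N.
Proof.
have [B_part _] := hB; have [A_part _] := hA.
have n_split : n = (l1 + l2)%N by case/and3P: B_part => _ _ /eqP <- /=; rewrite addn0.
have mu_nnil : mu != [::] by case: (mu) hs.
have m_pos : (0 < head 0 mu)%N.
  by case: (mu) mu_nnil A_part => //= x mu' _ /and3P[_ /andP[]].
have B_nil : (B ^+ l1 = 0)%R.
  by apply/eqP; rewrite -mxrank_eq0 (sh_rank_pow _ hB) nilJordan_pow_head ?mxrank0.
have kerB : (\rank (kermx B) <= 2)%N.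
  have := rank_nilJordan F B_part; rewrite -[B]expr1 mxrank_ker (sh_rank_pow 1 hB) /=.
  by rewrite expr1; lia.
have kerA : (size mu <= \rank (kermx A))%N.
  have := rank_nilJordan F A_part; rewrite -[A]expr1 mxrank_ker (sh_rank_pow 1 hA).
  by rewrite expr1; lia.
have A_pow : (A ^+ (head 0 mu).-1 != 0)%R.
  by rewrite -mxrank_eq0 (sh_rank_pow _ hA) mxrank_eq0 nilJordan_pow_neq0.
have := pow_neq0_bound hcomm B_nil kerB n_split kerA hs A_pow.
rewrite leq_divRL ?subn_gt0 //; case: (head 0 mu) m_pos => [//|m] _ /=.
by rewrite mulSn; lia.
Qed.
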